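(* There is an absolute constant $C>0$ such that the following holds for all integers $k\ge 2$ (with $k$ even), all $\gamma\in(0,1]$ and all $\varepsilon\in(0,1]$. If $n\ge C\,k/(\gamma^2\varepsilon^2)$, then there exists a public-coin $\varepsilon$-LDP protocol with $n$ users, in which each user sends a single bit, together with a decision rule for the curator, that is a uniformity tester over $[k]$ with distance parameter $\gamma$. (In this protocol the shared randomness consists of $O(1)$ independent uniformly random subsets $S\subseteq[k]$ of cardinality $k/2$; a user assigned to subset $S$ sends the bit $\mathbf 1\{X\in S\}$ after flipping it with probability $1/(1+e^{\varepsilon})$.)
   Context: For a finite set $\Omega$, $\Delta(\Omega)$ denotes the set of probability distributions on $\Omega$, and $d_{TV}(p,q)=\sup_{S\subseteq\Omega}(p(S)-q(S))=\frac12\|p-q\|_1$. $u$ denotes the uniform distribution on $[k]=\{1,\dots,k\}$. Protocol model: there are $n$ users; user $j$ holds $X_j$, where $X_1,\dots,X_n$ are i.i.d. from an unknown distribution $p$. A public-coin protocol consists of a shared random variable $U$ independent of the samples, and for each user $j$ and each value $v$ of $U$ a channel (Markov kernel) $W_j^{v}$ from the data domain to a finite message set; user $j$ sends $Z_j\sim W_j^{U}(\cdot\mid X_j)$, independently across users given $U$ and the samples; the curator outputs a (possibly randomized) function of $(U,Z_1,\dots,Z_n)$. The protocol is private-coin if $U$ is constant, and symmetric if $W_j^v$ does not depend on $j$. It is $\varepsilon$-LDP if $W_j^v(z\mid x)\le e^{\varepsilon}W_j^v(z\mid x')$ for all $j,v,z,x,x'$. A uniformity tester over $[k]$ with distance parameter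 $\gamma$ is a protocol whose curator output, for every $p\in\Delta([k])$, equals ``uniform'' with probability at least $2/3$ if $p=u$, and equals ``not uniform'' with probability at least $2/3$ if $d_{TV}(p,u)>\gamma$ (probabilities over samples, shared and private randomness). *)

From Stdlib Require Import Reals List.
Import ListNotations.
Open Scope R_scope.

Fixpoint rsum (n : nat) (f : nat -> R) : R :=
  match n with O => 0 | S n' => rsum n' f + f n' end.

Fixpoint rprod (n : nat) (f : nat -> R) : R :=
  match n with O => 1 | S n' => rprod n' f * f n' end.

Definition lsum {A : Type} (l : list A) (f : A -> R) : R :=
  fold_right (fun a acc => f a + acc) 0 l.

Fixpoint bitvecs (n : nat) : list (list bool) :=
  match n with
  | O => [nil]
  | S n' => flat_map (fun l => [false :: l; true :: l]) (bitvecs n')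
  end.

Definition is_dist (k : nat) (p : nat -> R) : Prop :=
  (forall i, (i < k)%nat -> 0 <= p i) /\ rsum k p = 1.

Definition is_uniform (k : nat) (p : nat -> R) : Prop :=
  forall i, (i < k)%nat -> p i = / INR k.

Definition dTV_unif (k : nat) (p : nat -> R) : R :=
  / 2 * rsum k (fun i => Rabs (p i - / INR k)).

(* One-bit public-coin protocol with n users over data domain [k]:
   - shared randomness U takes values v in {0,...,m-1} with probabilities w v;
   - W j v x = probability that user j sends bit 1 (true) on input x when U = v
     (the channel W_j^v; bit 0 has probability 1 - W j v x);
   - D v z = probability that the curator outputs "uniform" given U = v and
     messages z (z is the bit vector (Z_1,...,Z_n), user j's bit is nth j z false). *)
Record protocol := {
  nshared : nat;
  wshared : nat -> R;
  chan : nat -> nat -> nat -> R;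
  decide : nat -> list bool -> R
}.

Definition valid_protocol (n k : nat) (P : protocol) : Prop :=
  (forall v, (v < nshared P)%nat -> 0 <= wshared P v) /\
  rsum (nshared P) (wshared P) = 1 /\
  (forall j v x, (j < n)%nat -> (v < nshared P)%nat -> (x < k)%nat ->
      0 <= chan P j v x <= 1) /\
  (forall v z, (v < nshared P)%nat -> 0 <= decide P v z <= 1).

Definition is_LDP (eps : R) (n k : nat) (P : protocol) : Prop :=
  forall j v x x', (j < n)%nat -> (v < nshared P)%nat -> (x < k)%nat -> (x' < k)%nat ->
    chan P j v x <= exp eps * chan P j v x' /\
    1 - chan P j v x <= exp eps * (1 - chan P j v x').

Definition prob_one (k : nat) (p : nat -> R) (P : protocol) (j v : nat) : R :=
  rsum k (fun x => p x * chan P j v x).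

Definition accept_prob (n k : nat) (p : nat -> R) (P : protocol) : R :=
  rsum (nshared P) (fun v =>
    wshared P v *
    lsum (bitvecs n) (fun z =>
      rprod n (fun j => if nth j z false then prob_one k p P j v
                        else 1 - prob_one k p P j v)
      * decide P v z)).

Definition uniformity_tester (n k : nat) (gamma : R) (P : protocol) : Prop :=
  forall p : nat -> R, is_dist k p ->
    (is_uniform k p -> accept_prob n k p P >= 2 / 3) /\
    (dTV_unif k p > gamma -> 1 - accept_prob n k p P >= 2 / 3).

(** Each user reports, by randomized response, whether its sample lies in a
    shared uniformly random set [σ ⊆ [k]].  Under [p] the report is 1 with
    probability [Q_σ], and [Q_σ - t_σ = (e^ε/(1+e^ε) - 1/2) Σ_x (p x - 1/k) s_x]
    for Rademacher signs [s_x], where [t_σ] is the same probability under the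
    uniform distribution.  The curator compares the number of ones in a block of
    [b] users with [b t_σ].  If [p] is uniform, Chebyshev's inequality makes the
    test pass with probability at least [99/100].  If [d_TV(p,u) > γ], then
    [Σ_x (p x - 1/k)^2 > 4γ^2/k] by Cauchy–Schwarz, and the Paley–Zygmund
    inequality with the Khintchine bound [E Z^4 <= 3 (E Z^2)^2] shows that with
    probability at least [1/12] over [σ] the shift [|Q_σ - t_σ|] is so large
    that the test fails with probability at least [99/100].  Accepting iff 16
    independent blocks all pass amplifies both gaps to [2/3]. *)

From Stdlib Require Import Reals List Lia Lra FunctionalExtensionality.
Open Scope R_scope.

Lemma rsum_ext n f g : (forall i, (i < n)%nat -> f i = g i) -> rsum n f = rsum n g.
Proof. induction n; simpl; intros H; auto. rewrite IHn, H; auto. Qed.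

Lemma rsum_plus n f g : rsum n (fun i => f i + g i) = rsum n f + rsum n g.
Proof. induction n; simpl; [lra|]. rewrite IHn; lra. Qed.

Lemma rsum_scal n c f : rsum n (fun i => c * f i) = c * rsum n f.
Proof. induction n; simpl; [lra|]. rewrite IHn; lra. Qed.

Lemma rsum_const n c : rsum n (fun _ => c) = INR n * c.
Proof. induction n; simpl rsum; [simpl; lra|]. rewrite IHn, S_INR; lra. Qed.

Lemma rsum_shift n f : rsum (S n) f = f 0%nat + rsum n (fun i => f (S i)).
Proof. induction n; simpl in *; [lra|]. rewrite IHn; lra. Qed.

Lemma rsum_le n f g : (forall i, (i < n)%nat -> f i <= g i) -> rsum n f <= rsum n g.
Proof. induction n; simpl; intros H; [lra|]. apply Rplus_le_compat; auto. Qed.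

Lemma rsum_nonneg n f : (forall i, (i < n)%nat -> 0 <= f i) -> 0 <= rsum n f.
Proof.
  intros H. apply Rle_trans with (rsum n (fun _ => 0)).
  - rewrite rsum_const; lra.
  - now apply rsum_le.
Qed.

Lemma rsum_double n f :
  rsum (2 * n) f = rsum n (fun v => f (2 * v)%nat + f (2 * v + 1)%nat).
Proof.
  induction n; [reflexivity|].
  replace (2 * S n)%nat with (S (S (2 * n))) by lia.
  change (rsum (S (S (2 * n))) f) with (rsum (2 * n) f + f (2 * n)%nat + f (S (2 * n))).
  cbn [rsum]. rewrite IHn. replace (2 * n + 1)%nat with (S (2 * n)) by lia. lra.
Qed.

(* Cauchy–Schwarz against the constant vector, from [Σ (f i - m)^2 >= 0] for the mean [m]. *)
Lemma rsum_sqr_le n f : (rsum n f) ^ 2 <= INR n * rsum n (fun i => f i ^ 2).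
Proof.
  destruct n as [|n]; [simpl; lra|].
  set (N := INR (S n)). assert (HN : 0 < N) by apply lt_0_INR, Nat.lt_0_succ.
  set (A := rsum (S n) f). set (m := A / N).
  assert (Hvar : 0 <= rsum (S n) (fun i => (f i ^ 2 + (-2 * m) * f i) + m ^ 2)).
  { rewrite (rsum_ext _ _ (fun i => (f i - m) ^ 2)) by (intros; ring).
    apply rsum_nonneg; intros; apply pow2_ge_0. }
  rewrite !rsum_plus, rsum_scal, rsum_const in Hvar. fold A N in Hvar.
  replace (rsum (S n) (fun i => f i ^ 2) + -2 * m * A + N * m ^ 2)
    with (rsum (S n) (fun i => f i ^ 2) - A ^ 2 / N) in Hvar by (unfold m; field; lra).
  apply (Rmult_le_reg_l (/ N)); [now apply Rinv_0_lt_compat|].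
  replace (/ N * (N * rsum (S n) (fun i => f i ^ 2))) with (rsum (S n) (fun i => f i ^ 2))
    by (field; lra).
  unfold Rdiv in Hvar. lra.
Qed.

Lemma lsum_plus {A} (l : list A) f g : lsum l (fun a => f a + g a) = lsum l f + lsum l g.
Proof. induction l; unfold lsum in *; simpl; [lra|]. rewrite IHl; lra. Qed.

Lemma lsum_scal {A} (l : list A) c f : lsum l (fun a => c * f a) = c * lsum l f.
Proof. induction l; unfold lsum in *; simpl; [lra|]. rewrite IHl; lra. Qed.

Lemma lsum_bitvecs_S n f :
  lsum (bitvecs (S n)) f = lsum (bitvecs n) (fun l => f (false :: l) + f (true :: l)).
Proof.
  simpl. generalize (bitvecs n). induction l; unfold lsum in *; simpl; [lra|].
  rewrite IHl; lra.
Qed.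

Lemma rprod_shift n f : rprod (S n) f = f 0%nat * rprod n (fun i => f (S i)).
Proof. induction n; simpl in *; [lra|]. rewrite IHn; lra. Qed.

(** * Expectations over independent bits *)

Definition Ebern (q : nat -> R) (n : nat) (F : list bool -> R) : R :=
  lsum (bitvecs n)
    (fun z => rprod n (fun j => if nth j z false then q j else 1 - q j) * F z).

Notation Eunif n F := (Ebern (fun _ : nat => / 2) n F).

Lemma Ebern_0 q F : Ebern q 0 F = F nil.
Proof. unfold Ebern, lsum; simpl; lra. Qed.

Lemma Ebern_S q n F : Ebern q (S n) F =
  (1 - q 0%nat) * Ebern (fun j => q (S j)) n (fun l => F (false :: l)) +
  q 0%nat * Ebern (fun j => q (S j)) n (fun l => F (true :: l)).
Proof.
  unfold Ebern. rewrite lsum_bitvecs_S, <- !lsum_scal, <- lsum_plus.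
  f_equal; apply functional_extensionality; intros l.
  rewrite !rprod_shift. simpl nth. lra.
Qed.

Lemma Ebern_ext q n F G : (forall z, F z = G z) -> Ebern q n F = Ebern q n G.
Proof. intros H; f_equal; apply functional_extensionality; auto. Qed.

Lemma Ebern_ext_probs q q' n F :
  (forall j, (j < n)%nat -> q j = q' j) -> Ebern q n F = Ebern q' n F.
Proof.
  revert q q' F; induction n; intros q q' F H; [now rewrite !Ebern_0|].
  rewrite !Ebern_S, (H 0%nat) by lia.
  rewrite !(IHn (fun j => q (S j)) (fun j => q' (S j))) by (intros; apply H; lia).
  reflexivity.
Qed.

Lemma Ebern_plus q n F G : Ebern q n (fun z => F z + G z) = Ebern q n F + Ebern q n G.
Proof. revert q F G; induction n; intros; [now rewrite !Ebern_0|]. rewrite !Ebern_S, !IHn. lra. Qed.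

Lemma Ebern_scal q n c F : Ebern q n (fun z => c * F z) = c * Ebern q n F.
Proof. revert q F; induction n; intros; [now rewrite !Ebern_0|]. rewrite !Ebern_S, !IHn. lra. Qed.

Lemma Ebern_const q n c : Ebern q n (fun _ => c) = c.
Proof. revert q; induction n; intros; [now rewrite Ebern_0|]. rewrite !Ebern_S, !IHn. lra. Qed.

Lemma Ebern_nonneg q n F : (forall j, (j < n)%nat -> 0 <= q j <= 1) ->
  (forall z, 0 <= F z) -> 0 <= Ebern q n F.
Proof.
  revert q F; induction n as [|n IH]; intros q F Hq HF; [now rewrite Ebern_0|].
  rewrite Ebern_S. assert (Hq0 := Hq 0%nat ltac:(lia)).
  assert (0 <= Ebern (fun j => q (S j)) n (fun l => F (false :: l)))
    by (apply IH; auto; intros; apply Hq; lia).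
  assert (0 <= Ebern (fun j => q (S j)) n (fun l => F (true :: l)))
    by (apply IH; auto; intros; apply Hq; lia).
  nra.
Qed.

Section EbernOrder.

Variables (q : nat -> R) (n : nat).
Hypothesis q_prob : forall j, (j < n)%nat -> 0 <= q j <= 1.

Lemma Ebern_le F G : (forall z, F z <= G z) -> Ebern q n F <= Ebern q n G.
Proof.
  intros H. assert (Hd : 0 <= Ebern q n (fun z => G z + (-1) * F z)).
  { apply Ebern_nonneg; [exact q_prob|]. intros z; specialize (H z); lra. }
  rewrite Ebern_plus, Ebern_scal in Hd. lra.
Qed.

Lemma Ebern_ge_const c F : (forall z, c <= F z) -> c <= Ebern q n F.
Proof. intros H. rewrite <- (Ebern_const q n c). now apply Ebern_le. Qed.

Lemma Ebern_le_const c F : (forall z, F z <= c) -> Ebern q n F <= c.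
Proof. intros H. rewrite <- (Ebern_const q n c). now apply Ebern_le. Qed.

Lemma Ebern_range01 F : (forall z, 0 <= F z <= 1) -> 0 <= Ebern q n F <= 1.
Proof.
  intros H. split.
  - apply Ebern_ge_const; intros z; apply H.
  - apply Ebern_le_const; intros z; apply H.
Qed.

End EbernOrder.

Lemma Eunif_prob n : forall j, (j < n)%nat -> 0 <= / 2 <= 1.
Proof. intros; lra. Qed.

Lemma Ebern_split_mul q a c G H :
  Ebern q (a + c) (fun z => G (firstn a z) * H (skipn a z)) =
  Ebern q a G * Ebern (fun j => q (a + j)%nat) c H.
Proof.
  revert q G; induction a; intros q G.
  - rewrite Ebern_0. simpl. now rewrite Ebern_scal.
  - simpl plus. rewrite !Ebern_S. cbn [firstn skipn].
    rewrite (IHa (fun j => q (S j)) (fun l => G (false :: l))).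
    rewrite (IHa (fun j => q (S j)) (fun l => G (true :: l))).
    simpl. lra.
Qed.

Fixpoint decode (N v : nat) : list bool :=
  match N with O => nil | S N' => Nat.odd v :: decode N' (Nat.div2 v) end.

Lemma rsum_decode N F :
  rsum (2 ^ N) (fun v => / 2 ^ N * F (decode N v)) = Eunif N F.
Proof.
  revert F; induction N; intros F.
  - rewrite Ebern_0. simpl. lra.
  - change (2 ^ S N)%nat with (2 * 2 ^ N)%nat. rewrite rsum_double.
    rewrite Ebern_S, <- !IHN, <- !rsum_scal, <- rsum_plus. apply rsum_ext; intros v _.
    cbn [decode]. rewrite Nat.odd_even, Nat.odd_odd, Nat.div2_double, Nat.div2_odd'.
    simpl pow. rewrite Rinv_mult. lra.
Qed.

Definition indic_le (a b : R) : R := if Rle_dec a b then 1 else 0.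

Lemma indic_le_range a b : 0 <= indic_le a b <= 1.
Proof. unfold indic_le; destruct Rle_dec; lra. Qed.

(* With [λ = s/(2M)]: [Y <= s/2 + λ Y^2/2 + 1{Y >= s/2}/(2λ)] pointwise, by AM-GM on the event. *)
Lemma paley_zygmund q n Y s M :
  (forall j, (j < n)%nat -> 0 <= q j <= 1) -> (forall z, 0 <= Y z) ->
  Ebern q n Y = s -> Ebern q n (fun z => Y z ^ 2) <= M -> 0 < s -> 0 < M ->
  s ^ 2 / (4 * M) <= Ebern q n (fun z => indic_le (s / 2) (Y z)).
Proof.
  intros Hq HY HE HM Hs HM0.
  set (lam := s / (2 * M)). assert (Hlam : 0 < lam) by (unfold lam; apply Rdiv_lt_0_compat; lra).
  assert (Hpt : forall z, Y z <= s / 2 + lam / 2 * Y z ^ 2 + / (2 * lam) * indic_le (s / 2) (Y z)).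
  { intros z. specialize (HY z). set (y := Y z) in *.
    assert (Hi : 0 < / (2 * lam)) by (apply Rinv_0_lt_compat; lra).
    assert (Hy2 : 0 <= lam / 2 * y ^ 2) by (apply Rmult_le_pos; [lra | apply pow2_ge_0]).
    unfold indic_le; destruct Rle_dec; [|lra].
    enough (y <= lam / 2 * y ^ 2 + / (2 * lam)) by lra.
    apply (Rmult_le_reg_l (2 * lam)); [lra|].
    replace (2 * lam * (lam / 2 * y ^ 2 + / (2 * lam))) with ((lam * y) ^ 2 + 1) by (field; lra).
    assert (Hsq : 0 <= (lam * y - 1) ^ 2) by apply pow2_ge_0. nra. }
  assert (HE' := Ebern_le q n Hq _ _ Hpt).
  rewrite !Ebern_plus, !Ebern_scal, Ebern_const, HE in HE'.
  set (P := Ebern q n (fun z => indic_le (s / 2) (Y z))) in *.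
  assert (HlM : lam / 2 * Ebern q n (fun z => Y z ^ 2) <= lam / 2 * M)
    by (apply Rmult_le_compat_l; lra).
  replace (/ (2 * lam)) with (M / s) in HE' by (unfold lam; field; lra).
  replace (lam / 2 * M) with (s / 4) in HlM by (unfold lam; field; lra).
  assert (HsP : s * (s / 4) <= s * (M / s * P)) by (apply Rmult_le_compat_l; lra).
  replace (s * (M / s * P)) with (M * P) in HsP by (field; lra).
  apply (Rmult_le_reg_l (4 * M)); [lra|].
  replace (4 * M * (s ^ 2 / (4 * M))) with (s * s) by (field; lra). lra.
Qed.

(** * Rademacher sums *)

Definition sg (b : bool) : R := if b then 1 else -1.

Definition rademacher_sum (d : nat -> R) (k : nat) (s : list bool) : R :=
  rsum k (fun x => d x * sg (nth x s false)).

Lemma rademacher_sum_cons d k b l :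
  rademacher_sum d (S k) (b :: l) = d 0%nat * sg b + rademacher_sum (fun x => d (S x)) k l.
Proof. unfold rademacher_sum. now rewrite rsum_shift. Qed.

Lemma Eunif_S k F :
  Eunif (S k) F = Eunif k (fun l => / 2 * F (false :: l) + / 2 * F (true :: l)).
Proof. rewrite Ebern_S, Ebern_plus, !Ebern_scal. now replace (1 - / 2) with (/ 2) by lra. Qed.

Lemma Eunif_rademacher_sum_sqr k d :
  Eunif k (fun s => rademacher_sum d k s ^ 2) = rsum k (fun x => d x ^ 2).
Proof.
  revert d; induction k; intros d.
  - rewrite Ebern_0. unfold rademacher_sum; simpl; lra.
  - rewrite Eunif_S, rsum_shift.
    rewrite (Ebern_ext _ _ _ (fun l => rademacher_sum (fun x => d (S x)) k l ^ 2 + d 0%nat ^ 2)).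
    + now rewrite Ebern_plus, Ebern_const, IHk, Rplus_comm.
    + intros l. rewrite !rademacher_sum_cons. unfold sg. field.
Qed.

Lemma Eunif_rademacher_sum_pow4_le k d :
  Eunif k (fun s => rademacher_sum d k s ^ 4) <= 3 * rsum k (fun x => d x ^ 2) ^ 2.
Proof.
  revert d; induction k; intros d.
  - rewrite Ebern_0. unfold rademacher_sum; simpl; lra.
  - rewrite Eunif_S, rsum_shift. set (Z := rademacher_sum (fun x => d (S x)) k).
    rewrite (Ebern_ext _ _ _ (fun l => Z l ^ 4 + (6 * d 0%nat ^ 2) * Z l ^ 2 + d 0%nat ^ 4)).
    + rewrite !Ebern_plus, Ebern_const, Ebern_scal. unfold Z. rewrite Eunif_rademacher_sum_sqr.
      specialize (IHk (fun x => d (S x))).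
      set (s := rsum k (fun x => d (S x) ^ 2)) in *.
      assert (0 <= s) by (apply rsum_nonneg; intros; apply pow2_ge_0).
      assert (0 <= d 0%nat ^ 2) by apply pow2_ge_0. nra.
    + intros l. rewrite !rademacher_sum_cons. unfold Z, sg. field.
Qed.

Lemma rademacher_sum_sqr_large k d : 0 < rsum k (fun x => d x ^ 2) ->
  / 12 <= Eunif k (fun s => indic_le (rsum k (fun x => d x ^ 2) / 2) (rademacher_sum d k s ^ 2)).
Proof.
  intros Hs. set (s := rsum k _) in *.
  replace (/ 12) with (s ^ 2 / (4 * (3 * s ^ 2))) by (field; lra).
  apply paley_zygmund with (M := 3 * s ^ 2).
  - apply Eunif_prob.
  - intros; apply pow2_ge_0.
  - apply Eunif_rademacher_sum_sqr.
  - rewrite (Ebern_ext _ _ _ (fun z => rademacher_sum d k z ^ 4)) by (intros; ring).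
    apply Eunif_rademacher_sum_pow4_le.
  - exact Hs.
  - assert (0 < s ^ 2) by (apply pow_lt; lra). lra.
Qed.

Fixpoint count_ones (z : list bool) : R :=
  match z with nil => 0 | b :: l => (if b then 1 else 0) + count_ones l end.

Lemma Ebern_count_ones_var Q n :
  Ebern (fun _ => Q) n (fun z => (count_ones z - INR n * Q) ^ 2) = INR n * Q * (1 - Q).
Proof.
  induction n.
  - rewrite Ebern_0. simpl. ring.
  - rewrite Ebern_S, <- !Ebern_scal, <- Ebern_plus.
    rewrite (Ebern_ext _ _ _ (fun l => (count_ones l - INR n * Q) ^ 2 + Q * (1 - Q))).
    + rewrite Ebern_plus, Ebern_const, IHn, S_INR. ring.
    + intros l. simpl count_ones. rewrite S_INR. ring.
Qed.

Lemma count_ones_deviation Q b a : 0 <= Q <= 1 -> 0 < a ->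
  Ebern (fun _ => Q) b (fun z => indic_le a ((count_ones z - INR b * Q) ^ 2)) <= INR b / (4 * a).
Proof.
  intros HQ Ha. assert (Hb : 0 <= INR b) by apply pos_INR.
  assert (Hpt : forall z, indic_le a ((count_ones z - INR b * Q) ^ 2)
                          <= / a * (count_ones z - INR b * Q) ^ 2).
  { intros z. assert (0 < / a) by (apply Rinv_0_lt_compat; lra).
    assert (0 <= (count_ones z - INR b * Q) ^ 2) by apply pow2_ge_0.
    unfold indic_le; destruct Rle_dec as [Hle|]; [|nra].
    apply (Rmult_le_reg_l a); [lra|]. field_simplify; lra. }
  eapply Rle_trans; [apply Ebern_le, Hpt; intros; lra|].
  rewrite Ebern_scal, Ebern_count_ones_var.
  assert (0 <= (Q - / 2) ^ 2) by apply pow2_ge_0.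
  replace (INR b / (4 * a)) with (/ a * (INR b * / 4)) by (field; lra).
  apply Rmult_le_compat_l; [left; now apply Rinv_0_lt_compat|]. nra.
Qed.

(** * Randomized response *)

Definition aeps (eps : R) : R := exp eps / (1 + exp eps).

Definition rr (eps : R) (b : bool) : R := if b then aeps eps else 1 - aeps eps.

Lemma aeps_range eps : 0 < aeps eps < 1.
Proof.
  unfold aeps. assert (0 < exp eps) by apply exp_pos. split.
  - apply Rdiv_lt_0_compat; lra.
  - apply (Rmult_lt_reg_r (1 + exp eps)); [lra|]. field_simplify; lra.
Qed.

Lemma rr_range eps b : 0 <= rr eps b <= 1.
Proof. destruct (aeps_range eps); destruct b; simpl; lra. Qed.

Lemma rr_negb eps b : 1 - rr eps b = rr eps (negb b).
Proof. destruct b; simpl; ring. Qed.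

Lemma rr_LDP eps b b' : 0 <= eps -> rr eps b <= exp eps * rr eps b'.
Proof.
  intros He. assert (1 <= exp eps) by (pose proof (exp_ineq1_le eps); lra).
  assert (H1e : aeps eps = exp eps * (1 - aeps eps)) by (unfold aeps; field; lra).
  destruct (aeps_range eps); destruct b, b'; simpl; nra.
Qed.

Lemma aeps_sub_half_ge eps : 0 < eps <= 1 -> eps / 8 <= aeps eps - / 2.
Proof.
  intros He. assert (H1 := exp_ineq1_le eps).
  assert (H3 : exp eps <= 3).
  { apply Rle_trans with (exp 1); [|apply exp_le_3].
    destruct (Req_dec eps 1) as [->|]; [lra|]. left; apply exp_increasing; lra. }
  unfold aeps. set (e := exp eps) in *.
  replace (e / (1 + e) - / 2) with ((e - 1) / (2 * (1 + e))) by (field; lra).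
  apply (Rmult_le_reg_r (2 * (1 + e))); [lra|].
  replace ((e - 1) / (2 * (1 + e)) * (2 * (1 + e))) with (e - 1) by (field; lra). nra.
Qed.

(** * One block of users *)

Definition unif (k : nat) : nat -> R := fun _ => / INR k.

Definition report_prob (eps : R) (k : nat) (p : nat -> R) (σ : list bool) : R :=
  rsum k (fun x => p x * rr eps (nth x σ false)).

Definition block_test eps k b tau σ (zb : list bool) : R :=
  indic_le ((count_ones zb - INR b * report_prob eps k (unif k) σ) ^ 2) tau.

Definition block_pass eps k p b tau σ : R :=
  Ebern (fun _ => report_prob eps k p σ) b (block_test eps k b tau σ).

Definition pass_prob eps k p b tau : R := Eunif k (block_pass eps k p b tau).

Lemma report_prob_range eps k p σ : is_dist k p -> 0 <= report_prob eps k p σ <= 1.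
Proof.
  intros [Hp Hs]. unfold report_prob. split.
  - apply rsum_nonneg; intros i Hi. apply Rmult_le_pos; auto. apply rr_range.
  - rewrite <- Hs. apply rsum_le; intros i Hi.
    destruct (rr_range eps (nth i σ false)). specialize (Hp i Hi). nra.
Qed.

Lemma report_prob_sub_unif eps k p σ : is_dist k p -> (0 < k)%nat ->
  report_prob eps k p σ - report_prob eps k (unif k) σ =
  (aeps eps - / 2) * rademacher_sum (fun x => p x - / INR k) k σ.
Proof.
  intros [_ Hs] Hk. assert (HK : 0 < INR k) by now apply lt_0_INR.
  unfold report_prob, rademacher_sum, unif.
  transitivity (rsum k (fun x => / 2 * p x + (- / 2 * / INR k) +
       (aeps eps - / 2) * ((p x - / INR k) * sg (nth x σ false)))).
  - transitivity (rsum k (fun x => p x * rr eps (nth x σ false) +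
                                  (-1) * (/ INR k * rr eps (nth x σ false)))).
    { rewrite rsum_plus, (rsum_scal k (-1)). ring. }
    apply rsum_ext; intros i _. unfold rr, sg. destruct (nth i σ false); field; lra.
  - rewrite !rsum_plus, !rsum_scal, rsum_const, Hs. field. lra.
Qed.

Lemma block_pass_range eps k p b tau σ : is_dist k p -> 0 <= block_pass eps k p b tau σ <= 1.
Proof.
  intros Hd. apply Ebern_range01.
  - intros; now apply report_prob_range.
  - intros; apply indic_le_range.
Qed.

Lemma block_pass_unif eps k p b tau σ : is_dist k p -> is_uniform k p -> 0 < tau ->
  1 - INR b / (4 * tau) <= block_pass eps k p b tau σ.
Proof.
  intros Hd Hu Ht. assert (HQ := report_prob_range eps k p σ Hd).
  assert (Heq : report_prob eps k (unif k) σ = report_prob eps k p σ).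
  { apply rsum_ext; intros i Hi. unfold unif. now rewrite Hu. }
  assert (Hpt : forall z, 1 + (-1) * block_test eps k b tau σ z <=
     indic_le tau ((count_ones z - INR b * report_prob eps k p σ) ^ 2)).
  { intros z. unfold block_test, indic_le. rewrite Heq.
    do 2 destruct Rle_dec; lra. }
  apply (Ebern_le (fun _ => report_prob eps k p σ) b) in Hpt; [|intros; lra].
  rewrite Ebern_plus, Ebern_const, Ebern_scal in Hpt.
  assert (Hdev := count_ones_deviation _ b tau HQ Ht).
  unfold block_pass. lra.
Qed.

Lemma block_pass_far eps k p b tau σ : is_dist k p -> 0 < tau ->
  4 * tau <= (INR b * (report_prob eps k p σ - report_prob eps k (unif k) σ)) ^ 2 ->
  block_pass eps k p b tau σ
    <= INR b / (INR b * (report_prob eps k p σ - report_prob eps k (unif k) σ)) ^ 2.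
Proof.
  intros Hd Ht HY. assert (HQ := report_prob_range eps k p σ Hd).
  set (Q := report_prob eps k p σ) in *. set (t := report_prob eps k (unif k) σ) in *.
  set (Y := (INR b * (Q - t)) ^ 2) in *.
  assert (Hpt : forall z, block_test eps k b tau σ z <=
                          indic_le (Y / 4) ((count_ones z - INR b * Q) ^ 2)).
  { intros z. unfold block_test, indic_le. fold t.
    destruct (Rle_dec _ tau) as [Hin|]; [|destruct Rle_dec; lra].
    (* the count is within [sqrt tau] of [b t], which is at least [2 sqrt tau] from [b Q] *)
    destruct Rle_dec as [|Hnot]; [lra|]. exfalso; apply Hnot.
    replace (count_ones z - INR b * Q) with
      ((count_ones z - INR b * t) - INR b * (Q - t)) by ring.
    unfold Y in *. set (x := count_ones z - INR b * t) in *. set (y := INR b * (Q - t)) in *.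
    destruct (Rle_dec 0 y); [assert (2 * x <= y) by nra; assert (- y <= 2 * x) by nra
                            |assert (2 * x <= - y) by nra; assert (y <= 2 * x) by nra]; nra. }
  apply (Ebern_le (fun _ => Q) b) in Hpt; [|intros; lra].
  assert (Hdev := count_ones_deviation _ b (Y / 4) HQ ltac:(lra)).
  unfold block_pass. replace (INR b / (4 * (Y / 4))) with (INR b / Y) in Hdev by (field; lra).
  fold Q. lra.
Qed.

Definition gap2 (eps : R) (k : nat) (gamma : R) : R :=
  (aeps eps - / 2) ^ 2 * (2 * gamma ^ 2 / INR k).

Definition threshold eps k gamma (b : nat) : R := INR b ^ 2 * gap2 eps k gamma / 4.

Lemma pass_prob_range eps k p b tau : is_dist k p -> 0 <= pass_prob eps k p b tau <= 1.
Proof.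
  intros Hd. apply Ebern_range01; [apply Eunif_prob|]. intros; now apply block_pass_range.
Qed.

Lemma INR_mul_ge1_pos b g : 1 <= INR b * g -> 0 < INR b /\ 0 < g.
Proof. intros H. pose proof (pos_INR b). destruct (Rle_lt_dec g 0); [nra|]. split; nra. Qed.

Lemma pass_prob_unif eps k p gamma b :
  is_dist k p -> is_uniform k p -> 1 <= INR b * gap2 eps k gamma ->
  1 - / (INR b * gap2 eps k gamma) <= pass_prob eps k p b (threshold eps k gamma b).
Proof.
  intros Hd Hu Hbg. destruct (INR_mul_ge1_pos _ _ Hbg) as [Hb Hg].
  apply Ebern_ge_const; [apply Eunif_prob|]. intros σ.
  replace (/ (INR b * gap2 eps k gamma)) with (INR b / (4 * threshold eps k gamma b))
    by (unfold threshold; field; lra).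
  apply block_pass_unif; auto. unfold threshold.
  apply Rmult_lt_0_compat; [apply Rmult_lt_0_compat; [apply pow_lt|]|]; lra.
Qed.

Lemma dTV_sum_sqr_gt k p gamma : (0 < k)%nat -> 0 < gamma -> dTV_unif k p > gamma ->
  4 * gamma ^ 2 / INR k < rsum k (fun x => (p x - / INR k) ^ 2).
Proof.
  intros Hk Hg Hfar. assert (HK : 0 < INR k) by now apply lt_0_INR.
  set (A := rsum k (fun x => Rabs (p x - / INR k))).
  assert (HA : 2 * gamma < A) by (unfold dTV_unif in Hfar; fold A in Hfar; lra).
  assert (Hcs := rsum_sqr_le k (fun x => Rabs (p x - / INR k))). fold A in Hcs.
  rewrite (rsum_ext _ _ (fun x => (p x - / INR k) ^ 2)) in Hcs
    by (intros; rewrite <- !Rsqr_pow2; symmetry; apply Rsqr_abs).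
  apply (Rmult_lt_reg_l (INR k)); [lra|].
  replace (INR k * (4 * gamma ^ 2 / INR k)) with ((2 * gamma) ^ 2) by (field; lra).
  assert ((2 * gamma) ^ 2 < A ^ 2) by nra. lra.
Qed.

Lemma block_pass_far_sigma eps k p gamma b σ : is_dist k p -> 1 <= INR b * gap2 eps k gamma ->
  gap2 eps k gamma <= (report_prob eps k p σ - report_prob eps k (unif k) σ) ^ 2 ->
  block_pass eps k p b (threshold eps k gamma b) σ <= / (INR b * gap2 eps k gamma).
Proof.
  intros Hd Hbg Hgap. set (g := gap2 eps k gamma) in *.
  set (D := report_prob eps k p σ - report_prob eps k (unif k) σ) in *.
  destruct (INR_mul_ge1_pos _ _ Hbg) as [Hb0 Hg].
  assert (HbD : INR b ^ 2 * g <= (INR b * D) ^ 2).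
  { replace ((INR b * D) ^ 2) with (INR b ^ 2 * D ^ 2) by ring.
    apply Rmult_le_compat_l; [apply pow2_ge_0 | exact Hgap]. }
  assert (Hb2g : 0 < INR b ^ 2 * g) by (apply Rmult_lt_0_compat; [apply pow_lt|]; lra).
  eapply Rle_trans.
  { apply block_pass_far; [exact Hd | |]; fold D; unfold threshold; fold g; lra. }
  fold D.
  replace (/ (INR b * g)) with (INR b / (INR b ^ 2 * g)) by (field; lra).
  unfold Rdiv. apply Rmult_le_compat_l; [lra|]. apply Rinv_le_contravar; lra.
Qed.

Lemma pass_prob_far eps k p gamma b :
  is_dist k p -> (0 < k)%nat -> 0 < gamma -> dTV_unif k p > gamma ->
  1 <= INR b * gap2 eps k gamma ->
  pass_prob eps k p b (threshold eps k gamma b)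
    <= 1 - (1 - / (INR b * gap2 eps k gamma)) / 12.
Proof.
  intros Hd Hk Hg Hfar Hbg. set (eta := / (INR b * gap2 eps k gamma)).
  assert (Heta : eta <= 1) by (unfold eta; rewrite <- Rinv_1; apply Rinv_le_contravar; lra).
  set (d := fun x => p x - / INR k). set (s := rsum k (fun x => d x ^ 2)).
  assert (Hs : 4 * gamma ^ 2 / INR k < s) by now apply dTV_sum_sqr_gt.
  assert (HK : 0 < INR k) by now apply lt_0_INR.
  assert (Hs0 : 0 < s).
  { eapply Rle_lt_trans; [|exact Hs]. apply Rmult_le_pos; [|left; now apply Rinv_0_lt_compat].
    assert (0 <= gamma ^ 2) by apply pow2_ge_0. lra. }
  assert (Hpt : forall σ, block_pass eps k p b (threshold eps k gamma b) σ <=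
                  1 + (eta - 1) * indic_le (s / 2) (rademacher_sum d k σ ^ 2)).
  { intros σ. destruct (block_pass_range eps k p b (threshold eps k gamma b) σ Hd).
    unfold indic_le; destruct Rle_dec as [Hbig|]; [|lra].
    replace (1 + (eta - 1) * 1) with eta by ring. apply block_pass_far_sigma; auto.
    rewrite report_prob_sub_unif by auto. fold d. unfold gap2.
    replace (((aeps eps - / 2) * rademacher_sum d k σ) ^ 2) with
      ((aeps eps - / 2) ^ 2 * rademacher_sum d k σ ^ 2) by ring.
    apply Rmult_le_compat_l; [apply pow2_ge_0|].
    replace (2 * gamma ^ 2 / INR k) with ((4 * gamma ^ 2 / INR k) / 2) by (field; lra). lra. }
  apply (Ebern_le (fun _ => / 2) k) in Hpt; [|apply Eunif_prob].
  rewrite Ebern_plus, Ebern_const, Ebern_scal in Hpt.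
  assert (HPZ := rademacher_sum_sqr_large k d Hs0). fold s in HPZ.
  unfold pass_prob. nra.
Qed.

(* Users are cut into blocks of size [b]; block [r] uses bits [r k, ..., r k + k - 1]
   of the shared string [s] as its set [σ]. *)
Definition report_prob_shared eps k (p : nat -> R) b (s : list bool) (j : nat) : R :=
  rsum k (fun x => p x * rr eps (nth ((j / b) * k + x) s false)).

Fixpoint accept_all eps k b tau (r : nat) (s z : list bool) : R :=
  match r with
  | O => 1
  | S r' => block_test eps k b tau (firstn k s) (firstn b z) *
            accept_all eps k b tau r' (skipn k s) (skipn b z)
  end.

Lemma Eunif_accept_all eps k p b tau : (0 < b)%nat -> forall r n, (r * b <= n)%nat ->
  Eunif (r * k) (fun s => Ebern (report_prob_shared eps k p b s) n (accept_all eps k b tau r s))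
  = pass_prob eps k p b tau ^ r.
Proof.
  intros Hb r; induction r as [|r IHr]; intros n Hn.
  - simpl. rewrite Ebern_0. apply Ebern_const.
  - replace n with (b + (n - b))%nat by (simpl in Hn; lia).
    change (S r * k)%nat with (k + r * k)%nat.
    rewrite (Ebern_ext _ _ _ (fun s => block_pass eps k p b tau (firstn k s) *
      Ebern (report_prob_shared eps k p b (skipn k s)) (n - b) (accept_all eps k b tau r (skipn k s)))).
    + rewrite (Ebern_split_mul _ k (r * k) (block_pass eps k p b tau)
        (fun s' => Ebern (report_prob_shared eps k p b s') (n - b) (accept_all eps k b tau r s'))).
      cbv beta. rewrite IHr by (simpl in Hn; lia). reflexivity.
    + intros s. simpl accept_all. rewrite Ebern_split_mul. unfold block_pass. f_equal.
      * apply Ebern_ext_probs. intros j Hj. unfold report_prob_shared, report_prob.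
        apply rsum_ext; intros x Hx.
        rewrite Nat.div_small, nth_firstn by lia.
        now replace (x <? k)%nat with true by (symmetry; now apply Nat.ltb_lt).
      * apply Ebern_ext_probs. intros j Hj. unfold report_prob_shared.
        apply rsum_ext; intros x Hx. rewrite nth_skipn. do 3 f_equal.
        replace (b + j)%nat with (j + 1 * b)%nat by lia.
        rewrite Nat.div_add by lia. lia.
Qed.

(* Users [j >= 16 b] read past the end of the shared string and are ignored by the curator. *)
Definition rr_tester eps k gamma b : protocol := {|
  nshared := 2 ^ (16 * k);
  wshared := fun _ => / 2 ^ (16 * k);
  chan := fun j v x => rr eps (nth ((j / b) * k + x) (decode (16 * k) v) false);
  decide := fun v z => accept_all eps k b (threshold eps k gamma b) 16 (decode (16 * k) v) z
|}.

Lemma accept_prob_rr_tester eps k gamma p b n : (0 < b)%nat -> (16 * b <= n)%nat ->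
  accept_prob n k p (rr_tester eps k gamma b) = pass_prob eps k p b (threshold eps k gamma b) ^ 16.
Proof.
  intros Hb Hn. rewrite <- Eunif_accept_all with (n := n) by auto.
  rewrite <- rsum_decode. reflexivity.
Qed.

Lemma accept_all_range eps k b tau r s z : 0 <= accept_all eps k b tau r s z <= 1.
Proof.
  revert s z; induction r; intros s z; simpl; [lra|].
  specialize (IHr (skipn k s) (skipn b z)).
  destruct (indic_le_range ((count_ones (firstn b z) -
    INR b * report_prob eps k (unif k) (firstn k s)) ^ 2) tau).
  unfold block_test. nra.
Qed.

Lemma rr_tester_valid eps k gamma b n : valid_protocol n k (rr_tester eps k gamma b).
Proof.
  assert (H2 : 0 < 2 ^ (16 * k)) by (apply pow_lt; lra).
  split; [|split; [|split]]; cbn [nshared wshared chan decide rr_tester].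
  - intros v _. left. now apply Rinv_0_lt_compat.
  - rewrite rsum_const, pow_INR. replace (INR 2) with 2 by reflexivity. field. lra.
  - intros; apply rr_range.
  - intros; apply accept_all_range.
Qed.

Lemma rr_tester_LDP eps k gamma b n : 0 <= eps -> is_LDP eps n k (rr_tester eps k gamma b).
Proof. intros He j v x x' _ _ _ _. simpl. rewrite !rr_negb. split; now apply rr_LDP. Qed.

Lemma one_sub_pow_ge x n : 0 <= x <= 1 -> 1 - INR n * x <= (1 - x) ^ n.
Proof.
  intros Hx. induction n; [simpl; lra|].
  rewrite S_INR. simpl pow. assert (0 <= INR n) by apply pos_INR.
  assert (0 <= INR n * x * x) by (apply Rmult_le_pos; [apply Rmult_le_pos|]; lra). nra.
Qed.

Lemma pow16_le_third y : 0 <= y <= 1101 / 1200 -> y ^ 16 <= 1 / 3.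
Proof.
  intros Hy.
  assert (H2 : y ^ 2 <= 85 / 100) by nra.
  assert (H4 : y ^ 4 <= 73 / 100) by (replace (y ^ 4) with ((y ^ 2) ^ 2) by ring;
                                      assert (0 <= y ^ 2) by apply pow2_ge_0; nra).
  assert (H8 : y ^ 8 <= 54 / 100) by (replace (y ^ 8) with ((y ^ 4) ^ 2) by ring;
                                      assert (0 <= y ^ 4) by apply pow_le, Hy; nra).
  replace (y ^ 16) with ((y ^ 8) ^ 2) by ring.
  assert (0 <= y ^ 8) by apply pow_le, Hy. nra.
Qed.

Lemma rr_tester_uniformity eps k gamma b n :
  (0 < k)%nat -> 0 < gamma -> (16 * b <= n)%nat -> 100 <= INR b * gap2 eps k gamma ->
  uniformity_tester n k gamma (rr_tester eps k gamma b).
Proof.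
  intros Hk Hg Hbn Hbg p Hd.
  assert (Hb : (0 < b)%nat) by (apply INR_lt, INR_mul_ge1_pos with (gap2 eps k gamma); lra).
  rewrite accept_prob_rr_tester by auto.
  set (eta := / (INR b * gap2 eps k gamma)).
  assert (Heta : 0 <= eta <= / 100).
  { unfold eta. split; [left; apply Rinv_0_lt_compat; lra | apply Rinv_le_contravar; lra]. }
  destruct (pass_prob_range eps k p b (threshold eps k gamma b) Hd).
  split.
  - intros Hu. assert (HA := pass_prob_unif eps k p gamma b Hd Hu ltac:(lra)). fold eta in HA.
    assert ((1 - eta) ^ 16 <= pass_prob eps k p b (threshold eps k gamma b) ^ 16)
      by (apply pow_incr; lra).
    assert (HB := one_sub_pow_ge eta 16 ltac:(lra)). simpl (INR 16) in HB. lra.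
  - intros Hfar. assert (HA := pass_prob_far eps k p gamma b Hd Hk Hg Hfar ltac:(lra)).
    fold eta in HA.
    assert (pass_prob eps k p b (threshold eps k gamma b) ^ 16 <= 1 / 3)
      by (apply pow16_le_third; lra). lra.
Qed.

Lemma block_gap_large k gamma eps n : (2 <= k)%nat -> 0 < gamma <= 1 -> 0 < eps <= 1 ->
  INR n >= 1000000 * INR k / (gamma ^ 2 * eps ^ 2) -> 100 <= INR (n / 16) * gap2 eps k gamma.
Proof.
  intros Hk Hg He Hn.
  assert (HK : 2 <= INR k) by (replace 2 with (INR 2) by reflexivity; now apply le_INR).
  assert (Hge : 0 < gamma ^ 2 * eps ^ 2) by (apply Rmult_lt_0_compat; apply pow_lt; lra).
  assert (Hge1 : gamma ^ 2 * eps ^ 2 <= 1).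
  { rewrite <- (Rmult_1_l 1). apply Rmult_le_compat; try apply pow2_ge_0;
      rewrite <- (pow1 2); apply pow_incr; lra. }
  assert (Hn1 : 1000000 * INR k <= INR n * (gamma ^ 2 * eps ^ 2)).
  { apply Rge_le, (Rmult_le_compat_r (gamma ^ 2 * eps ^ 2)) in Hn; [|lra].
    replace (1000000 * INR k / (gamma ^ 2 * eps ^ 2) * (gamma ^ 2 * eps ^ 2))
      with (1000000 * INR k) in Hn by (field; lra). lra. }
  assert (Hb : INR n / 32 <= INR (n / 16)).
  { assert (E : INR n = 16 * INR (n / 16) + INR (n mod 16)).
    { rewrite (Nat.div_mod n 16) at 1 by lia. rewrite plus_INR, mult_INR. simpl (INR 16). ring. }
    assert (M : (n mod 16 <= 15)%nat) by (apply Nat.lt_succ_r, Nat.mod_upper_bound; lia).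
    apply le_INR in M. simpl (INR 15) in M.
    assert (30 <= INR n) by nra. lra. }
  assert (Hgap : eps ^ 2 * gamma ^ 2 / (32 * INR k) <= gap2 eps k gamma).
  { unfold gap2. assert (Hc := aeps_sub_half_ge eps He).
    replace (eps ^ 2 * gamma ^ 2 / (32 * INR k)) with ((eps / 8) ^ 2 * (2 * gamma ^ 2 / INR k))
      by (field; lra).
    apply Rmult_le_compat_r; [|apply pow_incr; lra].
    apply Rmult_le_pos; [assert (0 <= gamma ^ 2) by apply pow2_ge_0; lra|].
    left; apply Rinv_0_lt_compat; lra. }
  apply Rle_trans with (INR n / 32 * (eps ^ 2 * gamma ^ 2 / (32 * INR k))).
  - apply (Rmult_le_reg_r (1024 * INR k)); [lra|].
    replace (INR n / 32 * (eps ^ 2 * gamma ^ 2 / (32 * INR k)) * (1024 * INR k))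
      with (INR n * (gamma ^ 2 * eps ^ 2)) by (field; lra). lra.
  - apply Rmult_le_compat; auto.
    + apply Rmult_le_pos; [apply pos_INR | lra].
    + apply Rmult_le_pos; [apply Rmult_le_pos; apply pow2_ge_0|].
      left; apply Rinv_0_lt_compat; lra.
Qed.

Theorem theorem4p2 :
  exists C : R, C > 0 /\
    forall (k : nat) (gamma eps : R) (n : nat),
      (2 <= k)%nat -> Nat.Even k ->
      0 < gamma <= 1 -> 0 < eps <= 1 ->
      INR n >= C * INR k / (gamma ^ 2 * eps ^ 2) ->
      exists P : protocol,
        valid_protocol n k P /\ is_LDP eps n k P /\ uniformity_tester n k gamma P.
Proof.
  exists 1000000. split; [lra|].
  intros k gamma eps n Hk _ Hg He Hn.
  exists (rr_tester eps k gamma (n / 16)).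
  split; [apply rr_tester_valid|]. split; [apply rr_tester_LDP; lra|].
  apply rr_tester_uniformity; [lia | lra | apply Nat.Div0.mul_div_le |].
  now apply block_gap_large.
Qed.
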